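(* Let $a=(a^1,\ldots,a^M)\in\mathcal{C}^M$, $b=(b^1,\ldots,b^M)\in\mathcal{S}^M$ be type sequences whose FCFS matching $A$ is perfect. Form the exchanged sequences $\tilde{b}^m=b^n$, $\tilde{a}^n=a^m$ for $(m,n)\in A$, and then reverse time, obtaining the block $\overleftarrow{a}=(\tilde{a}^M,\ldots,\tilde{a}^1)$ (customers) and $\overleftarrow{b}=(\tilde{b}^M,\ldots,\tilde{b}^1)$ (servers). Then the FCFS matching of $\overleftarrow{a},\overleftarrow{b}$ is perfect, and for the i.i.d. sequences and any $m\in\mathbb{Z}$, $$P\big((c^{m+1},\ldots,c^{m+M})=\overleftarrow{a},(s^{m+1},\ldots,s^{m+M})=\overleftarrow{b}\mid\text{perfect}\big)=P\big((c^{m+1},\ldots,c^{m+M})=a,(s^{m+1},\ldots,s^{m+M})=b\mid\text{perfect}\big),$$ where ''perfect'' is the event that the FCFS matching of the two blocks of length $M$ is perfect.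
   Context: Let $\mathcal{C}$ and $\mathcal{S}$ be finite sets of customer and server types and $G=(\mathcal{C},\mathcal{S},\mathcal{E})$ a connected bipartite compatibility graph. $(c^m)_{m\in\mathbb{Z}}$ i.i.d. with law $\alpha$ and $(s^n)_{n\in\mathbb{Z}}$ i.i.d. with law $\beta$, independent, all probabilities positive. The FCFS matching of finite sequences is the unique complete matching (compatible index pairs, each index at most once, no unmatched compatible pair left) such that for every matched $(m,n)$ every compatible earlier server $s^l$, $l<n$, is matched to some customer $c^k$ with $k<m$ and every compatible earlier customer $c^k$, $k<m$, is matched to some $s^l$ with $l<n$; it is perfect if all items are matched. *)

From HB Require Import structures.
From mathcomp Require Import all_boot all_order all_algebra.
Set Implicit Arguments. Unset Strict Implicit. Unset Printing Implicit Defensive.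
Import Order.TTheory GRing.Theory Num.Theory.

Section FCFS.
Variables (C S : finType) (compat : C -> S -> bool) (M : nat).

Definition bip_adj : rel (C + S) := fun u v =>
  match u, v with
  | inl c, inr s => compat c s
  | inr s, inl c => compat c s
  | _, _ => false
  end.
Definition bip_connected : Prop := forall u v : C + S, connect bip_adj u v.

(* A matching of the blocks a (customers) and b (servers), indices 'I_M
   (index i stands for position i+1); (m, n) \in A means c^m matched to s^n. *)
Definition is_fcfs_matching (a : {ffun 'I_M -> C}) (b : {ffun 'I_M -> S})
    (A : {set 'I_M * 'I_M}) : bool :=
  [&& [forall p in A, compat (a p.1) (b p.2)],
      [forall m, forall n, forall n',
          ((m, n) \in A) && ((m, n') \in A) ==> (n == n')],
      [forall m, forall m', forall n,
          ((m, n) \in A) && ((m', n) \in A) ==> (m == m')],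
      [forall m, forall n, compat (a m) (b n) ==>
          [exists n', (m, n') \in A] || [exists m', (m', n) \in A]] &
      [forall p in A,
          [forall l : 'I_M, ((l < p.2)%N && compat (a p.1) (b l)) ==>
                      [exists k : 'I_M, ((k < p.1)%N && ((k, l) \in A))]] &&
          [forall k : 'I_M, ((k < p.1)%N && compat (a k) (b p.2)) ==>
                      [exists l : 'I_M, ((l < p.2)%N && ((k, l) \in A))]]]].

Definition perfect_matching (A : {set 'I_M * 'I_M}) : bool :=
  [forall m, exists n, (m, n) \in A] && [forall n, exists m, (m, n) \in A].

(* "The FCFS matching of (a, b) is perfect" (the FCFS matching is unique). *)
Definition fcfs_perfect (a : {ffun 'I_M -> C}) (b : {ffun 'I_M -> S}) : bool :=
  [exists A, is_fcfs_matching a b A && perfect_matching A].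

(* Exchanged sequences: btilde^m = b^n and atilde^n = a^m for (m,n) \in A
   (the default branch is never used when A is perfect). *)
Definition exch_b (b : {ffun 'I_M -> S}) (A : {set 'I_M * 'I_M})
  : {ffun 'I_M -> S} :=
  [ffun m => if [pick n | (m, n) \in A] is Some n then b n else b m].
Definition exch_a (a : {ffun 'I_M -> C}) (A : {set 'I_M * 'I_M})
  : {ffun 'I_M -> C} :=
  [ffun n => if [pick m | (m, n) \in A] is Some m then a m else a n].

Definition rev_block (T : Type) (x : {ffun 'I_M -> T}) : {ffun 'I_M -> T} :=
  [ffun i => x (rev_ord i)].

Variables (R : realFieldType) (alpha : C -> R) (beta : S -> R).

(* P((c^{m+1..m+M}) = x, (s^{m+1..m+M}) = y) for the i.i.d. sequences
   (independent of m). *)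
Definition block_prob (x : {ffun 'I_M -> C}) (y : {ffun 'I_M -> S}) : R :=
  (\prod_i alpha (x i) * \prod_i beta (y i))%R.

Definition prob_perfect : R :=
  (\sum_(x : {ffun 'I_M -> C}) \sum_(y : {ffun 'I_M -> S})
     if fcfs_perfect x y then block_prob x y else 0)%R.

Definition cond_prob_perfect (x : {ffun 'I_M -> C}) (y : {ffun 'I_M -> S}) : R :=
  ((if fcfs_perfect x y then block_prob x y else 0) / prob_perfect)%R.

End FCFS.

From HB Require Import structures.
From mathcomp Require Import all_boot all_order all_algebra.
From mathcomp Require Import zify.
Import Order.TTheory GRing.Theory Num.Theory.

Set Implicit Arguments.
Unset Strict Implicit.
Unset Printing Implicit Defensive.

(* A perfect FCFS matching is the graph of a bijection m |-> n between the two
   blocks. Exchanging the types along this bijection and reversing time turns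
   the pair (m, n) into the pair (M+1-n, M+1-m); the FCFS priority conditions
   for the new blocks are the old ones read backwards, so the reversed
   matching is again a perfect FCFS matching. The exchange and the reversal
   only permute the coordinates of each block, so the product probability of
   the block is unchanged, and so is its conditional probability. *)

Lemma ltn_rev_ord (n : nat) (i j : 'I_n) : (rev_ord i < rev_ord j)%N = (j < i)%N.
Proof. by rewrite /=; have := ltn_ord i; have := ltn_ord j; lia. Qed.

Lemma leq_rev_ord (n : nat) (i j : 'I_n) : (rev_ord i <= rev_ord j)%N = (j <= i)%N.
Proof. by rewrite leqNgt ltn_rev_ord -leqNgt. Qed.

Section FcfsMatching.
Variables (C S : finType) (compat : C -> S -> bool) (M : nat).
Implicit Types (a : {ffun 'I_M -> C}) (b : {ffun 'I_M -> S}).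
Implicit Types (A : {set 'I_M * 'I_M}) (i j k l m n : 'I_M).

Record fcfs_matching_spec a b A : Prop := FcfsMatchingSpec {
  fcfs_compat : forall m n, (m, n) \in A -> compat (a m) (b n);
  fcfs_functional : forall m n n', (m, n) \in A -> (m, n') \in A -> n = n';
  fcfs_injective : forall m m' n, (m, n) \in A -> (m', n) \in A -> m = m';
  fcfs_maximal : forall m n, compat (a m) (b n) ->
    (exists n' : 'I_M, (m, n') \in A) \/ (exists m' : 'I_M, (m', n) \in A);
  fcfs_server_priority : forall m n l, (m, n) \in A -> (l < n)%N ->
    compat (a m) (b l) -> exists2 k : 'I_M, (k < m)%N & (k, l) \in A;
  fcfs_customer_priority : forall m n k, (m, n) \in A -> (k < m)%N ->
    compat (a k) (b n) -> exists2 l : 'I_M, (l < n)%N & (k, l) \in A }.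

Lemma is_fcfs_matchingP a b A :
  reflect (fcfs_matching_spec a b A) (is_fcfs_matching compat a b A).
Proof.
apply: (iffP and5P) => [[Hc Hf Hi Hm Hp] | [Hc Hf Hi Hm Hsp Hcp]]; split.
- by move=> m n mn; apply: (forall_inP Hc (m, n)).
- move=> m n n' mn mn'; apply/eqP.
  by move/forallP/(_ m)/forallP/(_ n)/forallP/(_ n')/implyP: Hf; apply; rewrite mn.
- move=> m m' n mn m'n; apply/eqP.
  by move/forallP/(_ m)/forallP/(_ m')/forallP/(_ n)/implyP: Hi; apply; rewrite mn.
- move=> m n cmn; move/forallP/(_ m)/forallP/(_ n)/implyP/(_ cmn): Hm.
  by case/orP=> /existsP ?; [left | right].
- move=> m n l mn ln cml; have /andP[/forallP/(_ l)/implyP] := forall_inP Hp _ mn.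
  by rewrite ln cml => /(_ isT) /existsP [k /andP[]]; exists k.
- move=> m n k mn km ckn; have /andP[_ /forallP/(_ k)/implyP] := forall_inP Hp _ mn.
  by rewrite km ckn => /(_ isT) /existsP [l /andP[]]; exists l.
- by apply/forall_inP => -[m n]; apply: Hc.
- by do 3!apply/forallP => ?; apply/implyP => /andP[]; move/Hf => /[apply] ->.
- by do 3!apply/forallP => ?; apply/implyP => /andP[]; move/Hi => /[apply] ->.
- do 2!apply/forallP => ?; apply/implyP => /Hm [] [x Ax].
    by apply/orP; left; apply/existsP; exists x.
  by apply/orP; right; apply/existsP; exists x.
- apply/forall_inP => -[m n] mn; apply/andP; split; apply/forallP => x;
    apply/implyP => /andP[lt cx].
    by have [k ? ?] := Hsp _ _ _ mn lt cx; apply/existsP; exists k; apply/andP.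
  by have [l ? ?] := Hcp _ _ _ mn lt cx; apply/existsP; exists l; apply/andP.
Qed.

Lemma fcfs_server_priority_le a b A m n m' n' : fcfs_matching_spec a b A ->
  (m, n) \in A -> (m', n') \in A -> (n' <= n)%N -> compat (a m) (b n') ->
  (m' <= m)%N.
Proof.
move=> HA mn m'n'; rewrite leq_eqVlt => /orP[/eqP/val_inj eqn | ltn] cmn'.
  by move: m'n'; rewrite eqn => /(fcfs_injective HA mn) ->.
have [k km kn'] := fcfs_server_priority HA mn ltn cmn'.
by rewrite -(fcfs_injective HA kn' m'n') ltnW.
Qed.

Lemma fcfs_customer_priority_le a b A m n m' n' : fcfs_matching_spec a b A ->
  (m, n) \in A -> (m', n') \in A -> (m' <= m)%N -> compat (a m') (b n) ->
  (n' <= n)%N.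
Proof.
move=> HA mn m'n'; rewrite leq_eqVlt => /orP[/eqP/val_inj eqm | ltm] cm'n.
  by move: m'n'; rewrite eqm => /(fcfs_functional HA mn) ->.
have [l ln m'l] := fcfs_customer_priority HA mn ltm cm'n.
by rewrite -(fcfs_functional HA m'l m'n') ltnW.
Qed.

Definition matched_server A m : 'I_M := odflt m [pick n | (m, n) \in A].
Definition matched_customer A n : 'I_M := odflt n [pick m | (m, n) \in A].

Lemma exch_bE b A m : exch_b b A m = b (matched_server A m).
Proof. by rewrite ffunE /matched_server; case: pickP. Qed.

Lemma exch_aE a A n : exch_a a A n = a (matched_customer A n).
Proof. by rewrite ffunE /matched_customer; case: pickP. Qed.

Definition matching_rev A : {set 'I_M * 'I_M} :=
  [set p | (rev_ord p.2, rev_ord p.1) \in A].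

Lemma mem_matching_rev A i j :
  ((i, j) \in matching_rev A) = ((rev_ord j, rev_ord i) \in A).
Proof. by rewrite inE. Qed.

Lemma perfect_matching_rev A : perfect_matching A -> perfect_matching (matching_rev A).
Proof.
case/andP=> /forallP HAm /forallP HAn; apply/andP; split; apply/forallP => x.
  have /existsP[m mx] := HAn (rev_ord x).
  by apply/existsP; exists (rev_ord m); rewrite mem_matching_rev rev_ordK.
have /existsP[n xn] := HAm (rev_ord x).
by apply/existsP; exists (rev_ord n); rewrite mem_matching_rev rev_ordK.
Qed.

Section PerfectFcfsMatching.
Variables (a : {ffun 'I_M -> C}) (b : {ffun 'I_M -> S}) (A : {set 'I_M * 'I_M}).
Hypotheses (HA : fcfs_matching_spec a b A) (HAp : perfect_matching A).

Lemma matched_serverP m : (m, matched_server A m) \in A.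
Proof.
rewrite /matched_server; case: pickP => [n //|none].
by have /existsP[n] := forallP (andP HAp).1 m; rewrite none.
Qed.

Lemma matched_customerP n : (matched_customer A n, n) \in A.
Proof.
rewrite /matched_customer; case: pickP => [m //|none].
by have /existsP[m] := forallP (andP HAp).2 n; rewrite none.
Qed.

Lemma matched_server_eq m n : (m, n) \in A -> matched_server A m = n.
Proof. exact: (fcfs_functional HA (matched_serverP m)). Qed.

Lemma matched_customer_eq m n : (m, n) \in A -> matched_customer A n = m.
Proof. exact: (fcfs_injective HA (matched_customerP n)). Qed.

Lemma matched_server_inj : injective (matched_server A).
Proof.
move=> m m' eq_mm'; apply: (fcfs_injective HA (matched_serverP m)).
by rewrite eq_mm' matched_serverP.
Qed.

Lemma matched_customer_inj : injective (matched_customer A).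
Proof.
move=> n n' eq_nn'; apply: (fcfs_functional HA (matched_customerP n)).
by rewrite eq_nn' matched_customerP.
Qed.

Local Notation ra := (rev_block (exch_a a A)).
Local Notation rb := (rev_block (exch_b b A)).

Lemma fcfs_matching_rev_exch : fcfs_matching_spec ra rb (matching_rev A).
Proof.
have raE i : ra i = a (matched_customer A (rev_ord i)) by rewrite ffunE exch_aE.
have rbE j : rb j = b (matched_server A (rev_ord j)) by rewrite ffunE exch_bE.
split=> [i j | i j j' | i i' j | i j _ | i j l | i j k]; rewrite ?mem_matching_rev.
- move=> ij; rewrite raE rbE (matched_customer_eq ij) (matched_server_eq ij).
  exact: (fcfs_compat HA ij).
- by move=> ij ij'; apply: rev_ord_inj; exact: (fcfs_injective HA ij ij').
- by move=> ij i'j; apply: rev_ord_inj; exact: (fcfs_functional HA ij i'j).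
- left; exists (rev_ord (matched_customer A (rev_ord i))).
  by rewrite mem_matching_rev rev_ordK matched_customerP.
- move=> ij lj; rewrite raE rbE (matched_customer_eq ij) => cjl.
  exists (rev_ord (matched_server A (rev_ord l))); last first.
    by rewrite mem_matching_rev rev_ordK matched_serverP.
  rewrite -(rev_ordK i) ltn_rev_ord ltnNge; apply/negP => le_li.
  have := fcfs_server_priority_le HA ij (matched_serverP (rev_ord l)) le_li cjl.
  by rewrite leq_rev_ord leqNgt lj.
- move=> ij ki; rewrite raE rbE (matched_server_eq ij) => cki.
  exists (rev_ord (matched_customer A (rev_ord k))); last first.
    by rewrite mem_matching_rev rev_ordK matched_customerP.
  rewrite -(rev_ordK j) ltn_rev_ord ltnNge; apply/negP => le_kj.
  have := fcfs_customer_priority_le HA ij (matched_customerP (rev_ord k)) le_kj cki.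
  by rewrite leq_rev_ord leqNgt ki.
Qed.

End PerfectFcfsMatching.

End FcfsMatching.

Lemma big_rev_block (R : Type) (idx : R) (op : SemiGroup.com_law R) (T : Type)
    (n : nat) (F : T -> R) (x : {ffun 'I_n -> T}) :
  \big[op/idx]_i F (rev_block x i) = \big[op/idx]_i F (x i).
Proof. by rewrite [RHS](reindex_inj rev_ord_inj); apply: eq_bigr => i _; rewrite ffunE. Qed.

Section BlockProbability.
Variables (C S : finType) (compat : C -> S -> bool) (M : nat).
Variables (R : realFieldType) (alpha : C -> R) (beta : S -> R).
Implicit Types (a x : {ffun 'I_M -> C}) (b y : {ffun 'I_M -> S}).

Lemma block_prob_rev x y :
  block_prob alpha beta (rev_block x) (rev_block y) = block_prob alpha beta x y.
Proof. by rewrite /block_prob !big_rev_block. Qed.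

Lemma block_prob_exch a b (A : {set 'I_M * 'I_M}) :
  fcfs_matching_spec compat a b A -> perfect_matching A ->
  block_prob alpha beta (exch_a a A) (exch_b b A) = block_prob alpha beta a b.
Proof.
move=> HA HAp; rewrite /block_prob; congr (_ * _)%R.
  rewrite [RHS](reindex_inj (matched_customer_inj HA HAp)).
  by apply: eq_bigr => n _; rewrite exch_aE.
rewrite [RHS](reindex_inj (matched_server_inj HA HAp)).
by apply: eq_bigr => m _; rewrite exch_bE.
Qed.

Lemma cond_prob_perfect_eq x y x' y' :
  fcfs_perfect compat x y -> fcfs_perfect compat x' y' ->
  block_prob alpha beta x y = block_prob alpha beta x' y' ->
  cond_prob_perfect compat alpha beta x y = cond_prob_perfect compat alpha beta x' y'.
Proof. by rewrite /cond_prob_perfect => -> -> ->. Qed.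

End BlockProbability.

(* Connectivity of the compatibility graph and the positivity and normalisation
   of alpha and beta are standing assumptions of the paper; the statement holds
   without them. *)
Theorem corollary4p1 (C S : finType) (compat : C -> S -> bool)
  (Gconn : bip_connected compat)
  (R : realFieldType) (alpha : C -> R) (beta : S -> R)
  (alpha_pos : forall c, (0 < alpha c)%R) (beta_pos : forall s, (0 < beta s)%R)
  (alpha_sum : (\sum_c alpha c = 1)%R) (beta_sum : (\sum_s beta s = 1)%R)
  (M : nat) (a : {ffun 'I_M -> C}) (b : {ffun 'I_M -> S})
  (A : {set 'I_M * 'I_M})
  (HA : is_fcfs_matching compat a b A) (HAp : perfect_matching A) :
  let ra := rev_block (exch_a a A) in
  let rb := rev_block (exch_b b A) in
  fcfs_perfect compat ra rb /\
  cond_prob_perfect compat alpha beta ra rb = cond_prob_perfect compat alpha beta a b.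
Proof.
move=> ra rb; have /is_fcfs_matchingP HAspec := HA.
have perfect_ab : fcfs_perfect compat a b by apply/existsP; exists A; rewrite HA.
have perfect_rev : fcfs_perfect compat ra rb.
  apply/existsP; exists (matching_rev A).
  by rewrite perfect_matching_rev // andbT; apply/is_fcfs_matchingP/fcfs_matching_rev_exch.
split=> //; apply: cond_prob_perfect_eq => //.
by rewrite block_prob_rev (block_prob_exch _ _ HAspec).
Qed.
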